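(* Let $M$ be a closed $3$-manifold obtained by surgery on a framed oriented ordered link $L=L_1\cup\dots\cup L_m$ in an oriented integral homology $3$-sphere $N$, let $G=H_1(M)/\mathrm{Tors}\,H_1(M)$, let $[[t_i]]\in G$ be represented by the meridian of $L_i$, and let $I_0=\{i\mid[[t_i]]=1\}$. Assume that $I_0$ consists of all $i\in\{1,\dots,m\}$ except a certain $n$. Then the framing number of $L_n$ is $0$ and $lk(L_n,L_i)=0$ for all $i\ne n$. Moreover, for sets $I\subset J\subset I_0$, the group $H(L^{\overline I},L^{\overline I\cap J})$ has rank $1$ if and only if $I=J=I_0$.
   Context: $lk$ is the linking number in $N$; $lk(L_i,L_i)$ denotes the framing number. $\overline I=\{1,\dots,m\}\setminus I$, $L^K=\bigcup_{i\in K}L_i$. For a link $L'$ with components indexed by a set $K$ and a subset $K'\subsetneq K$, $H(L',L'^{K'})$ is the abelian group generated by $t_i$, $i\in K$, subject to the relations $\prod_{j\in K,j\ne i}(t_jt_i^{-1})^{lk(L_i,L_j)}=1$ for $i\in K'$. *)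

(* A surgery presentation of M on the framed link L in an
   integral homology sphere N is encoded by its linking matrix
   A : 'M[int]_m, A i j = lk(L_i,L_j) (i <> j), A i i = framing of L_i. *)
From HB Require Import structures.
From mathcomp Require Import all_boot all_order all_algebra.
Set Implicit Arguments. Unset Strict Implicit. Unset Printing Implicit Defensive.
Import Order.TTheory GRing.Theory Num.Theory.
Local Open Scope ring_scope.

(* H_1(M) = Z^m / (row space of A); generator e_i = meridian t_i.
   [[t_i]] = 1 in G = H_1(M)/Tors  iff  some nonzero multiple of e_i is a
   relation. *)
Definition trivial_class (m : nat) (A : 'M[int]_m) (i : 'I_m) : Prop :=
  exists k : int, k != 0 /\
    exists v : 'rV[int]_m, k *: (delta_mx 0 i : 'rV[int]_m) = v *m A.

Definition is_I0 (m : nat) (A : 'M[int]_m) (S : {set 'I_m}) : Prop :=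
  forall i, i \in S <-> trivial_class A i.

(* H(L', L'^{K'}) for the sublink L' = L^K: generators t_j (j in K), written
   additively as the vectors e_j supported on K; relation for i in K':
   sum_{j in K, j<>i} lk(L_i,L_j) (e_j - e_i). *)
Definition relvec (m : nat) (A : 'M[int]_m) (K : {set 'I_m}) (i : 'I_m)
  : 'rV[int]_m :=
  \row_j (if (j \in K) && (j != i) then A i j
          else if j == i then - \sum_(k in K | k != i) A i k else 0).

Definition in_rel (m : nat) (A : 'M[int]_m) (K K' : {set 'I_m})
  (v : 'rV[int]_m) : Prop :=
  exists w : 'I_m -> int, v = \sum_(i in K') w i *: relvec A K i.

Definition supported_on (m : nat) (K : {set 'I_m}) (v : 'rV[int]_m) : Prop :=
  forall j, j \notin K -> v 0 j = 0.

Definition indep_mod (m : nat) (A : 'M[int]_m) (K K' : {set 'I_m}) (d : nat)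
  (vs : 'I_d -> 'rV[int]_m) : Prop :=
  (forall k, supported_on K (vs k)) /\
  forall c : 'I_d -> int, in_rel A K K' (\sum_k c k *: vs k) ->
    forall k, c k = 0.

Definition H_rank (m : nat) (A : 'M[int]_m) (K K' : {set 'I_m}) (r : nat)
  : Prop :=
  (exists vs : 'I_r -> 'rV[int]_m, indep_mod A K K' vs) /\
  (forall vs : 'I_r.+1 -> 'rV[int]_m, ~ indep_mod A K K' vs).

From HB Require Import structures.
From mathcomp Require Import all_boot all_order all_algebra.
Import Order.TTheory GRing.Theory Num.Theory.
Local Open Scope ring_scope.

(* Every meridian except t_n has finite order in H_1(M), so one multiple k e_i
   of each of them (i <> n) lies in the row lattice of the linking matrix.
   Subtracting these from k times row j leaves k * lk(L_j, L_n) e_n; as t_n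
   has infinite order, column n, and by symmetry row n, of the linking matrix
   vanishes.  Every defining relation of H(L^{~I}, L^{~I & J}) has coordinate
   sum 0, and, since n is not in J, also t_n-coordinate 0; hence t_n and t_p
   are independent for any p in I0 \ I, which rules out rank 1 unless
   I = I0.  For I = J = I0 the group is free on the single generator t_n. *)

Lemma sum_coord_delta (R : pzSemiRingType) (m : nat) (x : 'I_m) :
  \sum_j ('e_x : 'rV[R]_m) 0 j = 1.
Proof.
rewrite (bigD1 x) //= mxE !eqxx big1 ?addr0 // => j nj.
by rewrite mxE (negbTE nj) andbF.
Qed.

Lemma sum_coord_lincomb (R : comPzSemiRingType) (I : finType) (P : pred I)
    (m : nat) (c : I -> R) (vs : I -> 'rV[R]_m) :
  \sum_j (\sum_(k | P k) c k *: vs k) 0 j =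
  \sum_(k | P k) c k * \sum_j vs k 0 j.
Proof.
under eq_bigr do rewrite summxE.
rewrite exchange_big; apply: eq_bigr => k _.
by rewrite mulr_sumr; apply: eq_bigr => j _; rewrite mxE.
Qed.

Section LinkingMatrix.

Context {m : nat} (A : 'M[int]_m).

Lemma trivial_class_common (S : {set 'I_m}) :
  (forall i, i \in S -> trivial_class A i) ->
  exists2 k : int, k != 0 &
    exists w : 'I_m -> 'rV[int]_m, forall i, i \in S -> k *: 'e_i = w i *m A.
Proof.
rewrite -[S]set_enum; elim: (enum S) => [|x s IH] trivS.
  by exists 1 => //; exists (fun=> 0) => i; rewrite inE.
have [|k nz_k [w Hw]] := IH.
  by move=> i si; apply: trivS; rewrite !inE in si *; rewrite si orbT.
have [|kx [nz_kx [v Hv]]] := trivS x; first by rewrite !inE eqxx.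
exists (k * kx); first by rewrite mulf_neq0.
exists (fun i => if i == x then k *: v else kx *: w i) => i.
rewrite !inE; case: eqP => [-> _ | _ /= si].
  by rewrite -scalerA Hv scalemxAl.
by rewrite mulrC -scalerA Hw ?inE // scalemxAl.
Qed.

Lemma col_eq0_of_nontrivial_class (n j : 'I_m) :
  (forall i, i != n -> trivial_class A i) -> ~ trivial_class A n -> A j n = 0.
Proof.
move=> trivA ntriv_n; apply/eqP/negPn/negP => nz_jn; apply: ntriv_n.
have [|k nz_k [w Hw]] := @trivial_class_common [set~ n].
  by move=> i; rewrite !inE; apply: trivA.
have row_j : 'e_j *m A =
    A j n *: 'e_n + \sum_(l | l != n) A j l *: 'e_l :> 'rV_m.
  rewrite -rowE {1}[row j A]row_sum_delta (bigD1 n) //=.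
  by congr (_ + _); [|apply: eq_bigr => l _]; rewrite mxE.
have sum_w : (\sum_(l | l != n) A j l *: w l) *m A =
              k *: \sum_(l | l != n) A j l *: 'e_l.
  rewrite mulmx_suml scaler_sumr; apply: eq_bigr => l nl.
  by rewrite -scalemxAl -Hw ?inE // scalerA mulrC -scalerA.
exists (k * A j n); split; first by rewrite mulf_neq0.
exists (k *: 'e_j - \sum_(l | l != n) A j l *: w l).
by rewrite mulmxBl sum_w -scalemxAl row_j scalerDr addrK scalerA.
Qed.

Lemma relvec_sum_eq0 (K : {set 'I_m}) (i : 'I_m) :
  \sum_j relvec A K i 0 j = 0.
Proof.
under eq_bigr do rewrite mxE.
rewrite (bigD1 i) //= eqxx andbF.
pose F j := if j \in K then A i j else 0.
rewrite [X in _ + X](eq_bigr F) => [|j nj]; last by rewrite nj andbT (negbTE nj).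
by rewrite -big_mkcondr; under eq_bigl do rewrite andbC; apply: addNr.
Qed.

Lemma relvec_coord (K : {set 'I_m}) (i j : 'I_m) :
  j != i -> relvec A K i 0 j = if j \in K then A i j else 0.
Proof. by move=> ji; rewrite mxE ji andbT (negbTE ji). Qed.

Lemma in_rel_sum_eq0 {K K' : {set 'I_m}} {v : 'rV[int]_m} :
  in_rel A K K' v -> \sum_j v 0 j = 0.
Proof.
case=> w ->; rewrite sum_coord_lincomb big1 // => i _.
by rewrite relvec_sum_eq0 mulr0.
Qed.

Lemma in_rel_coord_eq0 {K K' : {set 'I_m}} {j : 'I_m} {v : 'rV[int]_m} :
  j \notin K' -> (forall i, i \in K' -> A i j = 0) ->
  in_rel A K K' v -> v 0 j = 0.
Proof.
move=> jK' Aj0 [w ->]; rewrite summxE big1 // => i iK'.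
have ji : j != i by apply: contraNneq jK' => ->.
by rewrite mxE relvec_coord // Aj0 // if_same mulr0.
Qed.

Lemma in_rel_set0 (K : {set 'I_m}) (v : 'rV[int]_m) :
  in_rel A K set0 v <-> v = 0.
Proof.
split=> [[w ->] | ->]; first by rewrite big_set0.
by exists (fun=> 0); rewrite big_set0.
Qed.

Lemma supported_on_set1 (n : 'I_m) (v : 'rV[int]_m) :
  supported_on [set n] v -> v = v 0 n *: 'e_n.
Proof.
move=> supp_v; apply/rowP => j; rewrite !mxE eqxx /=.
by case: eqVneq => [-> | jn]; rewrite ?mulr1 // mulr0 supp_v // inE.
Qed.

Lemma H_rank_set1 (n : 'I_m) : H_rank A [set n] set0 1.
Proof.
split.
  exists (fun=> 'e_n); split.
    by move=> _ j; rewrite inE mxE => /negbTE ->; rewrite andbF.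
  move=> c /in_rel_set0; rewrite big_ord1 => /rowP /(_ n).
  by rewrite !mxE !eqxx mulr1 => c0 k; rewrite ord1.
move=> vs [supp indep].
pose a k := vs k 0 n.
have rel_comb c :
    \sum_k c k * a k = 0 -> in_rel A [set n] set0 (\sum_k c k *: vs k).
  move=> sum0; apply/in_rel_set0.
  under eq_bigr do rewrite (supported_on_set1 _ _ (supp _)) scalerA.
  by rewrite -scaler_suml sum0 scale0r.
(* [a 1 * vs 0 - a 0 * vs 1] vanishes, so independence kills both [a]s. *)
pose c (k : 'I_2) := if k == ord0 then a (lift ord0 ord0) else - a ord0.
have a0 k : a k = 0.
  have /indep c0 : in_rel A [set n] set0 (\sum_k c k *: vs k).
    by apply: rel_comb; rewrite big_ord_recl big_ord1 /c /= mulNr mulrC addrN.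
  have := c0 (lift ord0 ord0); rewrite /c /= => /eqP.
  rewrite oppr_eq0 => /eqP a00.
  have := c0 ord0; rewrite /c /= => a10.
  by case: (unliftP ord0 k) => [j -> | ->]; rewrite ?[j]ord1.
have /indep/(_ ord0)/eqP : in_rel A [set n] set0 (\sum_k 1 *: vs k).
  by apply: rel_comb; rewrite big1 // => k _; rewrite a0 mulr0.
by rewrite oner_eq0.
Qed.

Lemma indep_mod_delta2 {K K' : {set 'I_m}} {n p : 'I_m} :
  n \in K -> p \in K -> p != n -> n \notin K' ->
  (forall i, i \in K' -> A i n = 0) ->
  indep_mod A K K' (fun k : 'I_2 => 'e_(if k == ord0 then n else p)).
Proof.
move=> nK pK pn nK' An0; split.
  move=> k j jK; rewrite mxE eqxx /=; case: eqVneq => [jx | _] //.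
  by move: jK; rewrite jx; case: ifP; rewrite ?nK ?pK.
move=> c rel_c.
have := in_rel_sum_eq0 rel_c; have := in_rel_coord_eq0 nK' An0 rel_c.
rewrite sum_coord_lincomb summxE !big_ord_recl !big_ord0 /= !sum_coord_delta.
rewrite !mxE !eqxx eq_sym (negbTE pn) mulr1 mulr0 !addr0 => c0.
rewrite c0 mulr1 add0r => c1 k.
by case: (unliftP ord0 k) => [j -> | ->]; rewrite ?[j]ord1.
Qed.

End LinkingMatrix.

Theorem lemma10p3 (m : nat) (A : 'M[int]_m) (n : 'I_m) (I0 : {set 'I_m})
  (Asym : A^T = A)
  (hI0 : is_I0 A I0) (hI0n : I0 = [set~ n]) :
  A n n = 0 /\ (forall i : 'I_m, i != n -> A n i = 0) /\
  (forall I J : {set 'I_m}, I \subset J -> J \subset I0 ->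
     (H_rank A (~: I) (~: I :&: J) 1 <-> (I = I0 /\ J = I0))).
Proof.
have ntriv_n : ~ trivial_class A n by move/hI0; rewrite hI0n !inE eqxx.
have triv i : i != n -> trivial_class A i.
  by move=> ni; apply/hI0; rewrite hI0n !inE.
have col_n j : A j n = 0 := col_eq0_of_nontrivial_class A n j triv ntriv_n.
have row_n i : A n i = 0 by rewrite -Asym mxE col_n.
split; first exact: row_n.
split=> [i _ | I J IJ JI0]; first exact: row_n.
have II0 : I \subset I0 := subset_trans IJ JI0.
split; last by case=> -> ->; rewrite hI0n setCK setICr; apply: H_rank_set1.
case=> _ no_indep2.
suff EI : I = I0 by split=> //; apply/eqP; rewrite eqEsubset JI0 -EI IJ.
apply/eqP; rewrite eqEsubset II0.
apply/subsetP => p pI0; apply/negPn/negP => pI.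
have nI0 : n \notin I0 by rewrite hI0n !inE eqxx.
have nI : n \in ~: I by rewrite inE (contra (subsetP II0 n) nI0).
have nIJ : n \notin ~: I :&: J.
  by rewrite inE negb_and (contra (subsetP JI0 n) nI0) orbT.
have pn : p != n by move: pI0; rewrite hI0n !inE.
apply: no_indep2 _ (indep_mod_delta2 A nI _ pn nIJ (fun i _ => col_n i)).
by rewrite inE.
Qed.
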